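(* Let $n$ be a nonzero integer and let $a<b<c$ be positive integers with $ac>n$, such that $ac+n=s^2$ and $bc+n=t^2$ for nonnegative integers $s,t$. Put $\theta_1=\sqrt{1+\frac{n}{ac}}$ and $\theta_2=\sqrt{1+\frac{n}{bc}}$. Then every solution in positive integers $x,y,z$ of the system \[ az^2-cx^2=n(a-c),\qquad bz^2-cy^2=n(b-c) \] satisfies \[ \max\Big(\Big|\theta_1-\frac{sbx}{abz}\Big|,\ \Big|\theta_2-\frac{tay}{abz}\Big|\Big)<\frac{c\,|n|}{a}\,z^{-2}. \] *)

From Stdlib Require Export Reals ZArith.

(* Write [w = sqrt (a c)], so that [theta_1 = s / w] because [s^2 = w^2 + n].
   The equation [a z^2 - c x^2 = n (a - c)] factors as
   [(a z - w x)(a z + w x) = a n (a - c)], hence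
   [theta_1 - s x / (a z) = s n (a - c) / (w z (a z + w x))].
   The denominator is large: [s a z < w (a z + w x)], using [s <= w] when
   [n <= 0], and [s < 2 w] together with [a z < w x] when [n > 0].
   This gives the bound [c |n| / (a z^2)]; the second coordinate is the same
   estimate for [(b, t, y)], weakened by [c |n| / b <= c |n| / a]. *)
From Stdlib Require Import Reals Lra Psatz ZArith.
Open Scope R_scope.

Lemma sqrt_1_plus_div (p n s : R) :
  0 < p -> 0 <= s -> s ^ 2 = p + n -> sqrt (1 + n / p) = s / sqrt p.
Proof.
  intros Hp Hs Hs2.
  replace (1 + n / p) with (s ^ 2 / p) by (rewrite Hs2; field; lra).
  rewrite sqrt_div_alt by exact Hp.
  now rewrite sqrt_pow2.
Qed.

Section OneEquation.

Variables a c n s x z : R.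
Hypotheses (Ha : 0 < a) (Hac : a < c) (Hx : 0 < x) (Hz : 0 < z)
  (Hn_neq0 : n <> 0) (Hn_lt : n < a * c) (Hs : 0 <= s) (Hs2 : s ^ 2 = a * c + n)
  (Heq : a * z ^ 2 - c * x ^ 2 = n * (a - c)).

Let w := sqrt (a * c).

Let w_gt0 : 0 < w.
Proof. apply sqrt_lt_R0; nra. Qed.

Let w_sqr : w * w = a * c.
Proof. apply sqrt_sqrt; nra. Qed.

Lemma approx_error_eq :
  sqrt (1 + n / (a * c)) - s * x / (a * z)
  = s * n * (a - c) / (w * z * (a * z + w * x)).
Proof.
  rewrite (sqrt_1_plus_div (a * c) n s) by (try assumption; nra); fold w.
  field_simplify_eq; [| repeat split; nra].
  replace (w ^ 2) with (a * c) by (rewrite <- w_sqr; ring).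
  transitivity (s * a * (a * z ^ 2 - c * x ^ 2)); [ring |].
  rewrite Heq; ring.
Qed.

Lemma approx_denominator_gt : s * a * z < w * (a * z + w * x).
Proof.
  destruct (Rle_or_lt n 0) as [Hneg | Hpos].
  - assert (s <= w) by (apply Rsqr_incr_0_var; unfold Rsqr; nra).
    assert (s * (a * z) <= w * (a * z)) by (apply Rmult_le_compat_r; nra).
    assert (0 < w * (w * x)) by (rewrite <- Rmult_assoc, w_sqr; nra).
    nra.
  - assert (a * z < w * x).
    { apply Rsqr_incrst_0; unfold Rsqr; [| nra | nra].
      replace (w * x * (w * x)) with (a * (c * x ^ 2))
        by (rewrite <- Rmult_assoc, <- w_sqr; ring).
      replace (a * z * (a * z)) with (a * (a * z ^ 2)) by ring.
      apply Rmult_lt_compat_l; nra. }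
    assert (s < 2 * w) by (apply Rsqr_incrst_0; unfold Rsqr; nra).
    assert (s * (a * z) < 2 * w * (a * z)) by (apply Rmult_lt_compat_r; nra).
    assert (w * (a * z) < w * (w * x)) by (apply Rmult_lt_compat_l; nra).
    nra.
Qed.

Lemma approx_error_lt :
  Rabs (sqrt (1 + n / (a * c)) - s * x / (a * z)) < c * Rabs n / a * / z ^ 2.
Proof.
  assert (Hnabs : 0 < Rabs n) by (apply Rabs_pos_lt; exact Hn_neq0).
  assert (Hnum : s * (c - a) * (a * z) < c * (w * (a * z + w * x))).
  { pose proof approx_denominator_gt as Hden.
    assert (0 <= s * a * (a * z)) by (repeat apply Rmult_le_pos; lra).
    assert (c * (s * a * z) < c * (w * (a * z + w * x)))
      by (apply Rmult_lt_compat_l; lra).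
    lra. }
  rewrite approx_error_eq.
  replace (s * n * (a - c) / (w * z * (a * z + w * x)))
    with (n * - (s * (c - a) / (w * z * (a * z + w * x)))) by (field; nra).
  rewrite Rabs_mult, Rabs_Ropp, (Rabs_pos_eq (s * (c - a) / _))
    by (apply Rle_mult_inv_pos; repeat apply Rmult_lt_0_compat; nra).
  apply Rlt_0_minus.
  replace (c * Rabs n / a * / z ^ 2 - Rabs n * (s * (c - a) / (w * z * (a * z + w * x))))
    with (Rabs n * (c * (w * (a * z + w * x)) - s * (c - a) * (a * z))
          / (a * z ^ 2 * (w * (a * z + w * x)))) by (field; repeat split; nra).
  apply Rdiv_lt_0_compat; [nra |].
  repeat apply Rmult_lt_0_compat; nra.
Qed.

End OneEquation.

Lemma IZR_sqr (m : Z) : IZR (m ^ 2) = IZR m ^ 2.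
Proof. now rewrite pow_IZR. Qed.

Theorem lemma1 (n a b c s t x y z : Z) :
  n <> 0%Z ->
  (0 < a)%Z -> (a < b)%Z -> (b < c)%Z ->
  (a * c > n)%Z ->
  (0 <= s)%Z -> (0 <= t)%Z ->
  (a * c + n = s ^ 2)%Z -> (b * c + n = t ^ 2)%Z ->
  (0 < x)%Z -> (0 < y)%Z -> (0 < z)%Z ->
  (a * z ^ 2 - c * x ^ 2 = n * (a - c))%Z ->
  (b * z ^ 2 - c * y ^ 2 = n * (b - c))%Z ->
  let theta1 := sqrt (1 + IZR n / (IZR a * IZR c)) in
  let theta2 := sqrt (1 + IZR n / (IZR b * IZR c)) in
  Rmax (Rabs (theta1 - IZR s * IZR b * IZR x / (IZR a * IZR b * IZR z)))
       (Rabs (theta2 - IZR t * IZR a * IZR y / (IZR a * IZR b * IZR z)))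
  < IZR c * Rabs (IZR n) / IZR a * / (IZR z ^ 2).
Proof.
  intros Hn Ha Hab Hbc Hac Hs Ht Hs2 Ht2 Hx Hy Hz Heq1 Heq2 theta1 theta2.
  apply not_0_IZR in Hn.
  apply IZR_lt in Ha, Hab, Hbc, Hx, Hy, Hz.
  apply Z.gt_lt, IZR_lt in Hac; rewrite mult_IZR in Hac.
  apply IZR_le in Hs, Ht.
  apply (f_equal IZR) in Hs2, Ht2, Heq1, Heq2.
  rewrite !plus_IZR, !mult_IZR, !IZR_sqr in Hs2, Ht2.
  rewrite !mult_IZR, !minus_IZR, !mult_IZR, !IZR_sqr in Heq1, Heq2.
  apply Rmax_lub_lt.
  - replace (IZR s * IZR b * IZR x / (IZR a * IZR b * IZR z))
      with (IZR s * IZR x / (IZR a * IZR z)) by (field; lra).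
    apply approx_error_lt; try assumption; lra.
  - replace (IZR t * IZR a * IZR y / (IZR a * IZR b * IZR z))
      with (IZR t * IZR y / (IZR b * IZR z)) by (field; lra).
    apply Rlt_le_trans with (IZR c * Rabs (IZR n) / IZR b * / IZR z ^ 2).
    + apply approx_error_lt; try assumption; nra.
    + apply Rmult_le_compat_r; [left; apply Rinv_0_lt_compat, pow_lt; lra |].
      apply Rmult_le_compat_l; [apply Rmult_le_pos; [lra | apply Rabs_pos] |].
      apply Rinv_le_contravar; lra.
Qed.
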